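(* Let $\nu\in\mathbb M$. The following are equivalent: (1) $\nu$ is ergodic with respect to $\mathbb S\times\mathbb O$; (2) for every $k\ge0$, $\theta_k[\nu]$ is ergodic with respect to $\mathbb S^{2^k}$; (3) there is $n\ge0$ such that $\theta_k[\nu]$ is ergodic with respect to $\mathbb S^{2^k}$ for every $k\ge n$.
   Context: $I=\{0,1\}$. $\mathbb S$ is the left shift on $I^{\mathbb Z}$; for a measure $\eta$, $\mathbb S^j\eta$ is the pushforward. $I^{\mathbb N}$ is the space of $0$–$1$ sequences $(\alpha_i)_{i\ge1}$ with uniform Bernoulli measure $m$; $\mathbb O$ is the odometer (addition of $1$ with carry to the right: if $\alpha_1=\dots=\alpha_{n-1}=1$, $\alpha_n=0$, then $\mathbb O[\alpha]_i=0$ for $i<n$, $\mathbb O[\alpha]_n=1$, $\mathbb O[\alpha]_i=\alpha_i$ for $i>n$). $\mathbb M$ is the set of Borel probability measures on $I^{\mathbb Z}\times I^{\mathbb N}$ invariant under $\mathbb S\times\mathbb O$. For $k\ge0$, $A_{0,k}=\{\alpha:\alpha_1=\dots=\alpha_k=0\}$, and $\theta_k[\nu]$ is the normalized projection to $I^{\mathbb Z}$ of the restriction of $\nu$ to $I^{\mathbb Z}\times A_{0,k}$; it is $\mathbb S^{2^k}$-invariant. *)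

From HB Require Import structures.
From mathcomp Require Import all_boot all_order all_algebra.
From mathcomp Require Import all_classical all_reals all_analysis.
Set Implicit Arguments. Unset Strict Implicit. Unset Printing Implicit Defensive.
Import Order.TTheory GRing.Theory Num.Theory.
Local Open Scope classical_set_scope.
Local Open Scope ring_scope.

(* I^Z : two-sided 0-1 sequences, indexed by int, true = 1 *)
Definition cylZ : set (set (int -> bool)) :=
  [set A | exists (i : int) (b : bool), A = [set x | x i = b]].
Definition IZ := g_sigma_algebraType cylZ.

(* I^N : one-sided 0-1 sequences (alpha_1, alpha_2, ...) stored as
   nat -> bool with alpha_(i+1) at index i *)
Definition cylN : set (set (nat -> bool)) :=
  [set A | exists (i : nat) (b : bool), A = [set x | x i = b]].
Definition IN := g_sigma_algebraType cylN.

Definition shiftZ (x : IZ) : IZ := fun i => x (i + 1)%R.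

(* the odometer: bit n flips iff all the lower bits are 1
   (this is addition of 1 with carry to the right; all-ones maps to all-zeros) *)
Definition odometer (a : IN) : IN :=
  fun n => if [forall i : 'I_n, a i] then ~~ a n else a n.

Definition SxO (p : (IZ * IN)%type) : (IZ * IN)%type := (shiftZ p.1, odometer p.2).

Definition invariant_for d (X : measurableType d) (R : realType)
  (mu : set X -> \bar R) (T : X -> X) : Prop :=
  forall A, measurable A -> mu (T @^-1` A) = mu A.

Definition ergodic_for d (X : measurableType d) (R : realType)
  (mu : set X -> \bar R) (T : X -> X) : Prop :=
  invariant_for mu T /\
  forall A, measurable A -> T @^-1` A = A -> (mu A = 0)%E \/ (mu A = 1)%E.

Definition in_M (R : realType) (nu : probability (IZ * IN)%type R) : Prop :=
  invariant_for nu SxO.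

Definition A0 (k : nat) : set IN := [set a | forall i, (i < k)%N -> a i = false].

Definition theta (R : realType) (nu : probability (IZ * IN)%type R) (k : nat)
  : set IZ -> \bar R :=
  fun A => ((fine (nu (A `*` A0 k)) / fine (nu (setT `*` A0 k)))%:E).

From HB Require Import structures.
From mathcomp Require Import all_boot all_order all_algebra.
From mathcomp Require Import all_classical all_reals all_analysis.
From mathcomp Require Import zify.

Set Implicit Arguments. Unset Strict Implicit. Unset Printing Implicit Defensive.
Import Order.TTheory GRing.Theory Num.Theory.
Local Open Scope classical_set_scope.
Local Open Scope ring_scope.

(* Write X_k = I^Z x A_{0,k}.  On the first k digits the odometer acts as "+1 modulo 2^k",
   so S x O brings X_k back to itself exactly every 2^k steps.

   (1) -> (2): if B is S^(2^k)-invariant, the union of the (S x O)^-j (B x A_{0,k}), j < 2^k,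
   is (S x O)-invariant and meets X_k in B x A_{0,k}; so theta_k B is 0 or 1.

   (3) -> (1): let E be (S x O)-invariant and c_k = nu(E | X_k).  The charge
   A |-> nu((A x A_{0,k}) /\ E) - c_k nu(A x A_{0,k}) is S^(2^k)-invariant and, theta_k being
   ergodic, vanishes on invariant sets; a Hahn decomposition argument shows it vanishes
   identically.  Transporting by the odometer, nu(Y /\ E) = c_k nu(Y) on every rectangle
   A x {first k digits = r}; hence c_k does not depend on k >= n, and since these rectangles
   generate the product sigma-algebra, nu(. /\ E) = c nu.  Evaluating at E and at the whole
   space gives c = c^2. *)

Lemma measurable_preimage d d' (X : measurableType d) (Y : measurableType d')
    (f : X -> Y) (A : set Y) :
  measurable_fun setT f -> measurable A -> measurable (f @^-1` A).
Proof. by move=> mf mA; rewrite -[_ @^-1` _]setTI; exact: mf. Qed.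

Lemma measurable_iter d (X : measurableType d) (f : X -> X) j :
  measurable_fun setT f -> measurable_fun setT (iter j f).
Proof.
move=> mf; elim: j => [|j IH] /=; first exact: measurable_id.
exact: measurableT_comp mf IH.
Qed.

Lemma invariant_for_iter d (X : measurableType d) (R : realType)
    (mu : set X -> \bar R) (f : X -> X) j :
  measurable_fun setT f -> invariant_for mu f -> invariant_for mu (iter j f).
Proof.
move=> mf muf; elim: j => [|j IH] A mA //=.
rewrite -[_ @^-1` A]/(iter j f @^-1` (f @^-1` A)) IH ?muf //.
exact: measurable_preimage.
Qed.

Lemma preimage_iter_invariant (T : Type) (f : T -> T) (E : set T) j :
  f @^-1` E = E -> iter j f @^-1` E = E.
Proof.
by move=> fE; elim: j => [|j IH] //=; rewrite -[_ @^-1` E]/(iter j f @^-1` (f @^-1` E)) fE.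
Qed.

Lemma iter_can (T : Type) (f g : T -> T) j : cancel f g -> cancel (iter j f) (iter j g).
Proof. by move=> fK; elim: j => [|j IH] x //=; rewrite -iterS iterSr fK IH. Qed.

Lemma preimage_bigcup_iter_periodic (T : Type) (f : T -> T) (Y : set T) n :
  (0 < n)%N -> iter n f @^-1` Y = Y ->
  f @^-1` (\bigcup_(j in `I_n) iter j f @^-1` Y) = \bigcup_(j in `I_n) iter j f @^-1` Y.
Proof.
move=> n0 Yn; apply/seteqP; split => x [j /= jn Yj].
  have {}Yj : Y (iter j.+1 f x) by rewrite iterSr.
  have [jn'|nj] := ltnP j.+1 n; first by exists j.+1.
  by exists 0%N => //=; rewrite -Yn /= (_ : n = j.+1) //; lia.
case: j jn Yj => [_ Yx|j jn Yj].
  exists n.-1 => /=; first lia.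
  by change (Y (iter n.-1 f (f x))); rewrite -iterSr prednK //; move: Yx; rewrite -{1}Yn.
by exists j => /=; [lia|change (Y (iter j f (f x))); rewrite -iterSr].
Qed.

Lemma measure_setI_eq d (T : measurableType d) (R : realType)
    (mu : {finite_measure set T -> \bar R}) (Y Z W : set T) :
  measurable Y -> measurable Z -> measurable W -> Y `<=` Z -> mu Y = mu Z ->
  mu (Y `&` W) = mu (Z `&` W).
Proof.
move=> mY mZ mW YZ muYZ.
have mZY : measurable (Z `\` Y) by exact: measurableD.
have muZY : mu (Z `\` Y) = 0%E.
  have : (mu Z = mu (Z `\` Y) + mu (Z `&` Y))%E := measureDI mu mZ mY.
  rewrite setIidr // muYZ.
  move=> /(congr1 (fun t => t - mu Z)%E).
  by rewrite addeK ?subee ?fin_num_measure // => /esym.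
have mZW : measurable (Z `&` W) by exact: measurableI.
have -> : (mu (Z `&` W) = mu (Z `&` W `\` Y) + mu (Z `&` W `&` Y))%E :=
  measureDI mu mZW mY.
rewrite (@subset_measure0 _ _ _ mu (Z `&` W `\` Y) _ _ mZY _ muZY); last by move=> x [[]].
  by rewrite add0e setIAC (setIidr YZ).
exact: measurableD.
Qed.

(** * Invariant charges *)

Section fst_restr.
Context d1 d2 (T1 : measurableType d1) (T2 : measurableType d2) (R : realType).
Variables (mu : {finite_measure set (T1 * T2)%type -> \bar R}) (D : set (T1 * T2)%type).
Hypothesis mD : measurable D.

Definition fst_restr : set T1 -> \bar R := pushforward (mrestr mu mD) fst.

Let fst_restr0 : fst_restr set0 = 0%E.
Proof. by rewrite /fst_restr /pushforward preimage_set0 measure0. Qed.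

Let fst_restr_fin A : measurable A -> fst_restr A \is a fin_num.
Proof.
move=> mA; rewrite /fst_restr /pushforward /mrestr.
apply: fin_num_measure; apply: measurableI => //.
exact: measurable_preimage measurable_fst mA.
Qed.

Let fst_restr_sigma_additive : semi_sigma_additive fst_restr.
Proof.
by apply: (@measure_semi_sigma_additive _ _ _ (pushforward (mrestr mu mD) fst));
  exact: measurable_fst.
Qed.

HB.instance Definition _ :=
  isCharge.Build _ _ _ fst_restr fst_restr0 fst_restr_fin fst_restr_sigma_additive.

End fst_restr.

Section charge_lemmas.
Context d (T : measurableType d) (R : realType).
Implicit Type s : {charge set T -> \bar R}.
Local Open Scope charge_scope.

Lemma positive_set_le s (P A : set T) :
  s.-positive_set P -> measurable A -> A `<=` P -> (s A <= s P)%E.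
Proof.
move=> [mP posP] mA AP; rewrite (chargeDI s mP mA) (setIidr AP) leeDr //.
by apply: posP; [exact: measurableD|exact: subDsetl].
Qed.

Lemma bigcup_positive_set s (F : (set T)^nat) :
  (forall i, s.-positive_set (F i)) -> s.-positive_set (\bigcup_i F i).
Proof.
move=> posF; have [mF negF] : (copp s).-negative_set (\bigcup_i F i).
  apply: bigcup_negative_set => i; have [mFi posFi] := posF i.
  by split => // A mA AF; rewrite /copp /= oppe_le0; exact: posFi.
by split => // A mA AF; rewrite -oppe_le0; exact: negF.
Qed.

Lemma positive_setD_negative s (Q Q' : set T) :
  s.-positive_set Q -> measurable Q' -> Q' `<=` Q -> s Q' = s Q ->
  s.-negative_set (Q `\` Q').
Proof.
move=> [mQ posQ] mQ' Q'Q sQ'; have mD : measurable (Q `\` Q') by exact: measurableD.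
have sD : s (Q `\` Q') = 0%E.
  move: (chargeDI s mQ mQ'); rewrite (setIidr Q'Q) sQ'.
  move=> /(congr1 (fun t => t - s Q)%E).
  by rewrite addeK ?subee ?fin_num_measure // => /esym.
split => // A mA AD; move: (chargeDI s mD mA); rewrite sD (setIidr AD).
move=> /(congr1 (fun t => t - s A)%E); rewrite sub0e addeK ?fin_num_measure //.
move=> sA; rewrite -oppe_ge0 sA; apply: posQ; first exact: measurableD.
by move=> x [[]].
Qed.

Lemma charge_le_hahn_positive s (P N A : set T) :
  hahn_decomposition s P N -> measurable A -> (s A <= s P)%E.
Proof.
move=> [posP [mN negN] PNT PN0] mA; have mP := posP.1.
rewrite (charge_partition s mA mP mN PNT PN0); apply: (@le_trans _ _ (s (A `&` P))).
  by apply: geeDl; apply: negN; [exact: measurableI|exact: subIsetr].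
by apply: positive_set_le; [|exact: measurableI|exact: subIsetr].
Qed.

Section invariant_charge.
Variables U V : T -> T.
Hypotheses (mU : measurable_fun setT U) (mV : measurable_fun setT V).
Hypotheses (UK : cancel U V) (VK : cancel V U).

Section hahn_positive.
Variable s : {charge set T -> \bar R}.
Hypothesis s_invariant : forall A, measurable A -> s (U @^-1` A) = s A.
Hypothesis s_invariant_set0 : forall A, measurable A -> U @^-1` A = A -> s A = 0%E.

Lemma charge_iter_invariant j A : measurable A -> s (iter j U @^-1` A) = s A.
Proof.
elim: j A => [|j IH] A mA //=.
rewrite -[_ @^-1` A]/(iter j U @^-1` (U @^-1` A)) IH ?s_invariant //.
exact: measurable_preimage.
Qed.

Lemma positive_set_preimage P : s.-positive_set P -> s.-positive_set (U @^-1` P).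
Proof.
move=> [mP posP]; split => [|A mA AP]; first exact: measurable_preimage.
have -> : A = U @^-1` (V @^-1` A) by apply/seteqP; split => x /=; rewrite UK.
rewrite s_invariant; last exact: measurable_preimage.
by apply: posP; [exact: measurable_preimage|move=> x /AP /=; rewrite VK].
Qed.

Lemma positive_set_preimage_iter j P :
  s.-positive_set P -> s.-positive_set (iter j U @^-1` P).
Proof.
elim: j P => [|j IH] P posP //=.
by rewrite -[_ @^-1` P]/(iter j U @^-1` (U @^-1` P)); apply/IH/positive_set_preimage.
Qed.

(* Q := \bigcup_j U^-j P is positive and all its preimages U^-m Q have the same charge, so the
   differences U^-m Q \ U^-(m+1) Q are null; the invariant set \bigcap_m U^-m Q then has the
   charge of Q, which is therefore 0, and 0 <= s P <= s Q. *)
Lemma hahn_positive_eq0 P N : hahn_decomposition s P N -> s P = 0%E.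
Proof.
move=> [posP _ _ _]; pose Q := \bigcup_j iter j U @^-1` P.
have posQ : s.-positive_set Q.
  by apply: bigcup_positive_set => j; exact: positive_set_preimage_iter.
have mQ := posQ.1; pose Qm m := iter m U @^-1` Q.
have QmS m : Qm m.+1 `<=` Qm m.
  by move=> x [j _]; exists j.+1 => //=; rewrite -iterS iterSr.
pose P' := \bigcap_m Qm m.
have mP' : measurable P'.
  by apply: bigcapT_measurable => m; exact: measurable_preimage (measurable_iter _ mU) mQ.
have P'inv : U @^-1` P' = P'.
  have QmSr m : Qm m.+1 = U @^-1` Qm m.
    by apply/seteqP; split => x; rewrite /Qm /= -iterS iterSr.
  apply/seteqP; split => x /= P'x m _; last by have := P'x m.+1 I; rewrite QmSr.
  case: m => [|m]; last by rewrite QmSr; exact: P'x.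
  by apply: QmS; rewrite QmSr; exact: P'x.
have negQP' : s.-negative_set (\bigcup_m (Qm m `\` Qm m.+1)).
  apply: bigcup_negative_set => m; apply: positive_setD_negative => //.
  - exact: positive_set_preimage_iter.
  - exact: measurable_preimage (measurable_iter _ mU) mQ.
  - by rewrite !charge_iter_invariant.
have QP'0 : s (Q `\` P') = 0%E.
  apply/eqP; rewrite eq_le; apply/andP; split; last first.
    by apply: posQ.2; [exact: measurableD|exact: subDsetl].
  apply: negQP'.2; first exact: measurableD.
  move=> x [Qx /existsNP [m nQm]].
  suff [k Qk nQk] : exists2 k, Qm k x & ~ Qm k.+1 x by exists k.
  elim: m nQm => [nQ0|m IH nQm]; first by exfalso; apply: nQ0 => _.
  have [Qmx|nQmx] := pselect (Qm m x); first by exists m => // ?; apply: nQm.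
  by apply: IH => nQ; apply: nQmx; exact: nQ I.
have sQ : s Q = 0%E.
  rewrite (chargeDI s mQ mP') QP'0 add0e setIidr; first exact: s_invariant_set0.
  by move=> x /(_ 0%N I).
apply/eqP; rewrite eq_le; apply/andP; split; last by apply: posP.2 => //; exact: posP.1.
by rewrite -sQ; apply: positive_set_le posQ posP.1 _ => x Px; exists 0%N.
Qed.
End hahn_positive.

Lemma invariant_charge_eq0 (s : {charge set T -> \bar R}) :
  (forall A, measurable A -> s (U @^-1` A) = s A) ->
  (forall A, measurable A -> U @^-1` A = A -> s A = 0%E) ->
  forall A, measurable A -> s A = 0%E.
Proof.
move=> s_inv s_inv0 A mA.
have [P [N sPN]] := Hahn_decomposition s.
have [P' [N' sPN']] := Hahn_decomposition (copp s).
have sP0 := hahn_positive_eq0 s_inv s_inv0 sPN.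
have sP'0 : copp s P' = 0%E.
  apply: hahn_positive_eq0 sPN' => [B mB|B mB UB].
    by change (- s (U @^-1` B) = - s B)%E; rewrite s_inv.
  by change (- s B = 0)%E; rewrite s_inv0 ?oppe0.
apply/eqP; rewrite eq_le; apply/andP; split.
  by rewrite -sP0; exact: charge_le_hahn_positive sPN mA.
by rewrite -oppe_le0 -sP'0; exact: charge_le_hahn_positive sPN' mA.
Qed.
End invariant_charge.
End charge_lemmas.

(** * Binary digits and the odometer *)

Definition bitval (k : nat) (a : nat -> bool) : nat := (\sum_(i < k) a i * 2 ^ i)%N.

Definition bitcyl (k r : nat) : set IN := [set a | bitval k a = r].

Lemma bitvalS k a : bitval k.+1 a = (bitval k a + a k * 2 ^ k)%N.
Proof. by rewrite /bitval big_ord_recr. Qed.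

Lemma bitval_lt k a : (bitval k a < 2 ^ k)%N.
Proof.
elim: k => [|k IH]; first by rewrite /bitval big_ord0.
by rewrite bitvalS expnS; case: (a k) => /=; lia.
Qed.

Lemma bitval_mod k m a : bitval k a = (bitval (k + m) a %% 2 ^ k)%N.
Proof.
elim: m => [|m IH]; first by rewrite addn0 modn_small // bitval_lt.
by rewrite addnS bitvalS -modnDml -IH expnD mulnA mulnAC addnC modnMDl modn_small
  ?bitval_lt.
Qed.

Lemma bit_bitval i m a : (i < m)%N -> a i = odd (bitval m a %/ 2 ^ i).
Proof.
move=> /subnKC <-; elim: (m - i.+1)%N => [|p IH].
  rewrite addn0 bitvalS addnC divnMDl ?expn_gt0 // divn_small ?bitval_lt //.
  by case: (a i).
rewrite addnS bitvalS [X in (2 ^ X)%N]addSnnS expnD (mulnC (2 ^ i)%N) mulnA.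
by rewrite addnC divnMDl ?expn_gt0 // oddD oddM oddX /= andbF.
Qed.

Lemma forall_bitval k (a : nat -> bool) :
  [forall i : 'I_k, a i] = (bitval k a == (2 ^ k).-1)%N.
Proof.
elim: k => [|k IH]; first by rewrite /bitval big_ord0 expn0 eqxx; apply/forallP => -[].
have lt := bitval_lt k a; have k0 : (0 < 2 ^ k)%N by rewrite expn_gt0.
rewrite bitvalS expnS; apply/forallP/eqP => [all_a | bv i].
  have /eqP -> : bitval k a == (2 ^ k).-1.
    by rewrite -IH; apply/forallP => i; exact: (all_a (widen_ord (leqnSn k) i)).
  by rewrite (all_a ord_max); lia.
have ak : a k by move: bv; case: (a k) => //=; lia.
have /forallP all_a : [forall i : 'I_k, a i] by rewrite IH; move: bv; rewrite ak; lia.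
have [ik|] := ltnP i k; first exact: (all_a (Ordinal ik)).
move=> ki; have /eqP -> // : i == k :> nat by rewrite eqn_leq ki -ltnS ltn_ord.
Qed.

Lemma bitval_odometer k a : bitval k (odometer a) = ((bitval k a).+1 %% 2 ^ k)%N.
Proof.
elim: k => [|k IH]; first by rewrite /bitval !big_ord0 modn1.
have lt := bitval_lt k a; have k0 : (0 < 2 ^ k)%N by rewrite expn_gt0.
rewrite !bitvalS IH {1}/odometer forall_bitval expnS.
have [->|ne] := eqVneq (bitval k a) (2 ^ k).-1.
  rewrite prednK // modnn; case: (a k) => /=; last by rewrite modn_small; lia.
  by rewrite [X in (X %% _)%N](_ : _ = 2 * 2 ^ k)%N ?modnn //; lia.
by rewrite !modn_small //; case: (a k) => /=; lia.
Qed.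

Lemma bitval_iter_odometer k j a :
  bitval k (iter j odometer a) = ((bitval k a + j) %% 2 ^ k)%N.
Proof.
elim: j => [|j IH] /=; first by rewrite addn0 modn_small // bitval_lt.
by rewrite bitval_odometer IH -addn1 modnDml addn1 addnS.
Qed.

Lemma A0_bitcyl k : A0 k = bitcyl k 0.
Proof.
apply/seteqP; split => a; rewrite /A0 /bitcyl /bitval /=.
  move=> a0; apply/eqP; rewrite sum_nat_eq0; apply/forallP => i /=.
  by rewrite a0.
move/eqP; rewrite sum_nat_eq0 => /forallP a0 i ik.
by move: (a0 (Ordinal ik)); rewrite muln_eq0 expn_eq0 orbF; case: (a i).
Qed.

Lemma bitcylS k r : bitcyl k.+1 r =
  if (r < 2 ^ k)%N then bitcyl k r `&` [set a | a k = false]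
  else bitcyl k (r - 2 ^ k) `&` [set a | a k = true].
Proof.
apply/seteqP; split => a; rewrite /bitcyl /= bitvalS; have := bitval_lt k a.
  by case: (ltnP r (2 ^ k)); case E: (a k) => /= rk lt e;
    try (exfalso; lia); split => //; lia.
by case: (ltnP r (2 ^ k)) => rk lt [/= e ->] /=; lia.
Qed.

Lemma bitcyl_split k r : (r < 2 ^ k)%N ->
  bitcyl k r = bitcyl k.+1 r `|` bitcyl k.+1 (r + 2 ^ k).
Proof.
move=> rk; rewrite !bitcylS rk ltnNge leq_addl addnK -setIUr.
by apply/esym/setIidl => a _ /=; case: (a k); [right|left].
Qed.

Lemma bitcylI k k' r r' : (k <= k')%N ->
  bitcyl k r `&` bitcyl k' r' = if (r' %% 2 ^ k == r)%N then bitcyl k' r' else set0.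
Proof.
move=> /subnKC kk'; apply/seteqP; split => a; rewrite /bitcyl /=.
  by move=> [<- <-]; rewrite -kk' -bitval_mod eqxx.
by case: eqP => // <- <-; split => //; rewrite -kk' -bitval_mod.
Qed.

Lemma preimage_iter_odometer_bitcyl k j r : (r < 2 ^ k)%N ->
  iter j odometer @^-1` bitcyl k ((r + j) %% 2 ^ k) = bitcyl k r.
Proof.
move=> rk; apply/seteqP; split => a; rewrite /bitcyl /= bitval_iter_odometer.
  by move/eqP; rewrite eqn_modDr !modn_small ?bitval_lt // => /eqP.
by move=> ->.
Qed.

Lemma cylN_bigcup_bitcyl m i b : (i < m)%N ->
  [set a : IN | a i = b] = \bigcup_(r in [set r | odd (r %/ 2 ^ i) = b]) bitcyl m r.
Proof.
move=> im; apply/seteqP; split => a /=.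
  by move=> <-; exists (bitval m a) => //; rewrite /= -bit_bitval.
by move=> [r /= <-] <-; rewrite -bit_bitval.
Qed.

Lemma bitcyl_disjoint k r r' : r != r' -> bitcyl k r `&` bitcyl k r' = set0.
Proof.
by move/eqP=> rr'; apply/seteqP; split => a // [/= ar ar']; apply: rr'; rewrite -ar -ar'.
Qed.

Lemma bitcyl_empty k r : (2 ^ k <= r)%N -> bitcyl k r = set0.
Proof.
by move=> kr; apply/seteqP; split => a //= ar; have := bitval_lt k a; rewrite ar; lia.
Qed.

(** * Measurability and dynamics on I^Z x I^N *)

Lemma measurable_cylN i b : measurable [set a : IN | a i = b].
Proof. by apply: sub_sigma_algebra; exists i, b. Qed.

Lemma measurable_cylZ i b : measurable [set x : IZ | x i = b].
Proof. by apply: sub_sigma_algebra; exists i, b. Qed.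

Lemma measurable_bitcyl k r : measurable (bitcyl k r).
Proof.
elim: k r => [r|k IH r]; last first.
  by rewrite bitcylS; case: ifP => _; apply: measurableI => //; exact: measurable_cylN.
have -> : bitcyl 0 r = if r == 0%N then setT else set0.
  by apply/seteqP; split => a; rewrite /bitcyl /= /bitval big_ord0;
    case: eqP => // r0 e; exfalso; exact: r0.
by case: ifP.
Qed.

Lemma measurable_A0 k : measurable (A0 k).
Proof. by rewrite A0_bitcyl; exact: measurable_bitcyl. Qed.

Lemma measurable_setX_A0 A k : measurable A -> measurable (A `*` A0 k : set (IZ * IN)).
Proof. by move=> mA; apply: measurableX => //; exact: measurable_A0. Qed.

Definition shiftZinv (x : IZ) : IZ := fun i => x (i - 1).

Lemma shiftZK : cancel shiftZ shiftZinv.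
Proof. by move=> x; apply/funext => i; rewrite /shiftZ /shiftZinv subrK. Qed.

Lemma shiftZinvK : cancel shiftZinv shiftZ.
Proof. by move=> x; apply/funext => i; rewrite /shiftZ /shiftZinv addrK. Qed.

Lemma measurable_shiftZ : measurable_fun setT shiftZ.
Proof.
apply: (@measurability _ _ IZ IZ setT _ cylZ erefl) => _ [_ [i [b ->]] <-].
by rewrite setTI; exact: measurable_cylZ.
Qed.

Lemma measurable_shiftZinv : measurable_fun setT shiftZinv.
Proof.
apply: (@measurability _ _ IZ IZ setT _ cylZ erefl) => _ [_ [i [b ->]] <-].
by rewrite setTI; exact: measurable_cylZ.
Qed.

Lemma measurable_odometer : measurable_fun setT odometer.
Proof.
apply: (@measurability _ _ IN IN setT _ cylN erefl) => _ [_ [n [b ->]] <-]; rewrite setTI.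
pose C := bitcyl n (2 ^ n).-1.
have -> : odometer @^-1` [set a | a n = b] =
    (C `&` [set a | a n = ~~ b]) `|` (~` C `&` [set a | a n = b]).
  apply/seteqP; split => a; rewrite /odometer /C /bitcyl /= forall_bitval;
    case: eqP => /=.
  - by move=> ? <-; left; rewrite negbK.
  - by move=> ? ?; right.
  - by move=> _ [[_ ->]|[]//]; rewrite negbK.
  - by move=> ne [[/ne]|[]].
have mC : measurable C := measurable_bitcyl _ _.
by apply: measurableU; apply: measurableI => //;
  [exact: measurable_cylN|exact: measurableC|exact: measurable_cylN].
Qed.

Lemma measurable_SxO : measurable_fun setT SxO.
Proof.
apply: measurable_fun_pair.
- exact: measurableT_comp measurable_shiftZ measurable_fst.
- exact: measurableT_comp measurable_odometer measurable_snd.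
Qed.

Lemma iter_SxO j p : iter j SxO p = (iter j shiftZ p.1, iter j odometer p.2).
Proof. by elim: j => [|j IH] /=; [case: p|rewrite IH]. Qed.

Lemma preimage_iter_SxO_setX j A B : iter j SxO @^-1` (A `*` B) =
  (iter j shiftZ @^-1` A) `*` (iter j odometer @^-1` B).
Proof. by apply/seteqP; split => p; rewrite /= iter_SxO. Qed.

Lemma preimage_iter_odometer_A0 k : iter (2 ^ k) odometer @^-1` A0 k = A0 k.
Proof.
have := @preimage_iter_odometer_bitcyl k (2 ^ k) 0; rewrite expn_gt0 add0n modnn.
by rewrite -A0_bitcyl; apply.
Qed.

Lemma preimage_iter_odometer_A0_bitcyl k r : (r < 2 ^ k)%N ->
  iter (2 ^ k - r) odometer @^-1` A0 k = bitcyl k r.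
Proof.
move=> rk; have := preimage_iter_odometer_bitcyl (2 ^ k - r) rk.
by rewrite subnKC ?modnn -?A0_bitcyl // ltnW.
Qed.

Lemma setTX_A0S k : setT `*` A0 k =
  (setT `*` A0 k.+1) `|` (setT `*` bitcyl k.+1 (2 ^ k)) :> set (IZ * IN).
Proof.
rewrite !A0_bitcyl bitcyl_split ?expn_gt0 // add0n.
apply/seteqP; split => -[x a] /=; first by move=> [_ [h|h]]; [left|right].
by case=> -[_ h]; split => //; [left|right].
Qed.

Lemma setTX_A0S_disjoint k :
  (setT `*` A0 k.+1) `&` (setT `*` bitcyl k.+1 (2 ^ k)) = set0 :> set (IZ * IN).
Proof.
by rewrite -setXI A0_bitcyl bitcyl_disjoint ?setX0 // eq_sym -lt0n expn_gt0.
Qed.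

Definition saturation k (B : set IZ) : set (IZ * IN) :=
  \bigcup_(j in `I_(2 ^ k)) iter j SxO @^-1` (B `*` A0 k).

Lemma measurable_saturation k B : measurable B -> measurable (saturation k B).
Proof.
move=> mB; apply: bigcup_measurable => j _.
exact: measurable_preimage (measurable_iter _ measurable_SxO) (measurable_setX_A0 k mB).
Qed.

Lemma preimage_SxO_saturation k B :
  iter (2 ^ k) shiftZ @^-1` B = B -> SxO @^-1` saturation k B = saturation k B.
Proof.
move=> Binv; apply: preimage_bigcup_iter_periodic; first by rewrite expn_gt0.
by rewrite preimage_iter_SxO_setX Binv preimage_iter_odometer_A0.
Qed.

Lemma saturation_setI_A0 k B : saturation k B `&` (setT `*` A0 k) = B `*` A0 k.
Proof.
apply/seteqP; split => [[x a] [[j /= jk]]|[x a] [Bx a0]]; last first.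
  by split => //; exists 0%N => //=; rewrite expn_gt0.
rewrite iter_SxO /= !A0_bitcyl /bitcyl /= bitval_iter_odometer => -[Bx ja] [_ a0].
move: ja; rewrite a0 add0n modn_small // => j0.
by move: Bx; rewrite j0.
Qed.

(** * Invariant probabilities and the measures theta_k *)

Section invariant_probability.
Variables (R : realType) (nu : probability (IZ * IN)%type R).
Hypothesis nu_inv : in_M nu.

Lemma measure_preimage_iter_SxO_setI j Y E :
  measurable Y -> measurable E -> SxO @^-1` E = E ->
  nu ((iter j SxO @^-1` Y) `&` E) = nu (Y `&` E).
Proof.
move=> mY mE Einv; rewrite -{1}(preimage_iter_invariant j Einv) -preimage_setI.
by rewrite (invariant_for_iter j measurable_SxO nu_inv) //; exact: measurableI.
Qed.

Lemma measure_shift_setX_A0_setI k A E :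
  measurable A -> measurable E -> SxO @^-1` E = E ->
  nu ((iter (2 ^ k) shiftZ @^-1` A `*` A0 k) `&` E) = nu ((A `*` A0 k) `&` E).
Proof.
move=> mA mE Einv; rewrite -[in LHS](preimage_iter_odometer_A0 k) -preimage_iter_SxO_setX.
by rewrite measure_preimage_iter_SxO_setI //; exact: measurable_setX_A0.
Qed.

Lemma measure_shift_setX_A0 k A : measurable A ->
  nu (iter (2 ^ k) shiftZ @^-1` A `*` A0 k) = nu (A `*` A0 k).
Proof.
move=> mA; have := measure_shift_setX_A0_setI k mA measurableT (preimage_setT _).
by rewrite !setIT.
Qed.

Lemma measure_setX_bitcyl_setI k r A E : (r < 2 ^ k)%N ->
  measurable A -> measurable E -> SxO @^-1` E = E ->
  nu ((A `*` bitcyl k r) `&` E) =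
  nu ((iter (2 ^ k - r) shiftZinv @^-1` A `*` A0 k) `&` E).
Proof.
move=> rk mA mE Einv; rewrite -[RHS](measure_preimage_iter_SxO_setI (2 ^ k - r)) //; last first.
  exact: measurable_setX_A0 k (measurable_preimage (measurable_iter _ measurable_shiftZinv) mA).
rewrite preimage_iter_SxO_setX preimage_iter_odometer_A0_bitcyl //.
by congr (nu ((_ `*` _) `&` _)); apply/seteqP; split => x /=; rewrite (iter_can _ shiftZK).
Qed.

Lemma measure_setTX_A0S k :
  nu (setT `*` A0 k) = (nu (setT `*` A0 k.+1) + nu (setT `*` A0 k.+1))%E.
Proof.
have k1 : (2 ^ k < 2 ^ k.+1)%N by rewrite ltn_exp2l.
have shifted : nu (setT `*` bitcyl k.+1 (2 ^ k)) = nu (setT `*` A0 k.+1).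
  rewrite -(setIT (setT `*` bitcyl _ _)) measure_setX_bitcyl_setI //.
  by rewrite preimage_setT setIT.
rewrite setTX_A0S measureU ?setTX_A0S_disjoint //; first by congr (_ + _)%E; exact: shifted.
- exact: measurable_setX_A0.
- by apply: measurableX => //; exact: measurable_bitcyl.
Qed.

Lemma measure_setTX_A0_gt0 k : (0 < fine (nu (setT `*` A0 k)))%R.
Proof.
apply: fine_gt0; rewrite lt0e measure_ge0 andbT ltey_eq fin_num_measure ?andbT; last first.
  exact: measurable_setX_A0.
elim: k => [|k IH].
  rewrite (_ : setT `*` A0 0 = setT) ?probability_setT //.
  by apply/seteqP; split => -[x a] //= _; split.
by apply: contraNN IH => /eqP nu0; rewrite measure_setTX_A0S nu0 adde0.
Qed.

Lemma theta_eq0 k A : measurable A -> theta nu k A = 0%E <-> nu (A `*` A0 k) = 0%E.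
Proof.
move=> mA; have x0 := measure_setTX_A0_gt0 k; rewrite /theta.
split => [/eqP|->]; last by rewrite mul0r.
rewrite eqe mulf_eq0 invr_eq0 (gt_eqF x0) orbF => /eqP a0.
by rewrite -[nu _]fineK ?a0 // fin_num_measure //; exact: measurable_setX_A0.
Qed.

Lemma theta_eq1 k A : measurable A ->
  theta nu k A = 1%E <-> nu (A `*` A0 k) = nu (setT `*` A0 k).
Proof.
move=> mA; have x0 := measure_setTX_A0_gt0 k; rewrite /theta.
split => [/eqP|->]; last by rewrite divff // gt_eqF.
rewrite eqe => /eqP a1.
have {}a1 : fine (nu (A `*` A0 k)) = fine (nu (setT `*` A0 k)).
  by rewrite -[LHS](divfK (lt0r_neq0 x0)) a1 mul1r.
by rewrite -[LHS]fineK ?a1 ?fineK // fin_num_measure //; exact: measurable_setX_A0.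
Qed.

Lemma theta_invariant k : invariant_for (theta nu k) (iter (2 ^ k) shiftZ).
Proof. by move=> A mA; rewrite /theta measure_shift_setX_A0. Qed.

Lemma ergodic_theta k : ergodic_for nu SxO -> ergodic_for (theta nu k) (iter (2 ^ k) shiftZ).
Proof.
move=> [_ nu_erg]; split => [|B mB Binv]; first exact: theta_invariant.
have mX0 := measurable_setX_A0 k (@measurableT _ IZ).
have mS := measurable_saturation k mB.
have [nuS0|nuS1] := nu_erg _ mS (preimage_SxO_saturation Binv).
  left; apply/theta_eq0 => //; apply: subset_measure0 nuS0 => //.
  - exact: measurable_setX_A0.
  - by rewrite -saturation_setI_A0; exact: subIsetl.
right; apply/theta_eq1 => //; rewrite -saturation_setI_A0.
transitivity (nu (setT `&` (setT `*` A0 k))); last by rewrite setTI.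
by apply: measure_setI_eq => //; exact: eq_trans nuS1 (esym (probability_setT nu)).
Qed.

End invariant_probability.

Definition bitcyl_rects n : set (set (IZ * IN)) :=
  [set Y | exists A k r, [/\ measurable A, (n <= k)%N & Y = A `*` bitcyl k r]].

Lemma setI_closed_bitcyl_rects n : setI_closed (bitcyl_rects n).
Proof.
move=> _ _ [A [k [r [mA nk ->]]]] [A' [k' [r' [mA' nk' ->]]]]; rewrite -setXI.
wlog kk' : A A' k k' r r' mA mA' nk nk' / (k <= k')%N.
  move=> wlogH; have [|/ltnW k'k] := leqP k k'; first exact: wlogH.
  by rewrite setIC [bitcyl k r `&` _]setIC; exact: wlogH.
rewrite bitcylI //; case: ifP => _; last by exists set0, k', 0%N; rewrite setX0 set0X.
by exists (A `&` A'), k', r'; split => //; exact: measurableI.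
Qed.

Lemma bitcyl_rects_generate n : measurable = <<s bitcyl_rects n >>.
Proof.
apply/seteqP; split; last first.
  apply: smallest_sub; first exact: sigma_algebra_measurable.
  by move=> _ [A [k [r [mA _ ->]]]]; apply: measurableX => //; exact: measurable_bitcyl.
pose G := g_sigma_algebraType (bitcyl_rects n).
have mfst : measurable_fun (setT : set G) (@fst IZ IN).
  move=> _ A mA; rewrite setTI.
  have -> : fst @^-1` A = \bigcup_r (A `*` bitcyl n r).
    by apply/seteqP; split => -[x a] /=; [exists (bitval n a)|case=> r _ []].
  by apply: bigcupT_measurable => r; apply: sub_sigma_algebra; exists A, n, r.
have msnd : measurable_fun (setT : set G) (@snd IZ IN).
  apply: (@measurability _ _ G IN setT _ cylN erefl) => _ [_ [i [b ->]] <-].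
  pose m := maxn i.+1 n; rewrite setTI (cylN_bigcup_bitcyl b (leq_maxl i.+1 n)).
  rewrite preimage_bigcup; apply: bigcup_measurable => r _.
  apply: sub_sigma_algebra; exists setT, m, r; split => //; first exact: leq_maxr.
  by rewrite setTX.
move=> Y mY; have := measurable_fun_pair mfst msnd measurableT mY.
by rewrite setTI (_ : _ @^-1` Y = Y) //; apply/seteqP; split => -[].
Qed.

Section ergodic_of_theta.
Variables (R : realType) (nu : probability (IZ * IN)%type R).
Hypothesis nu_inv : in_M nu.
Variable E : set (IZ * IN).
Hypotheses (mE : measurable E) (E_inv : SxO @^-1` E = E).

Local Notation theta_ergodic k := (ergodic_for (theta nu k) (iter (2 ^ k) shiftZ)).

Definition E_ratio k : R :=
  fine (nu ((setT `*` A0 k) `&` E)) / fine (nu (setT `*` A0 k)).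

Lemma E_ratioE k : nu ((setT `*` A0 k) `&` E) = ((E_ratio k)%:E * nu (setT `*` A0 k))%E.
Proof.
have x0 := measure_setTX_A0_gt0 nu_inv k.
rewrite -[in RHS](fineK (fin_num_measure _ _ (measurable_setX_A0 k measurableT))).
rewrite -EFinM divfK ?lt0r_neq0 // fineK // fin_num_measure //.
by apply: measurableI => //; exact: measurable_setX_A0.
Qed.

Lemma measure_setX_A0_setIE k A : theta_ergodic k -> measurable A ->
  nu ((A `*` A0 k) `&` E) = ((E_ratio k)%:E * nu (A `*` A0 k))%E.
Proof.
move=> [_ theta_erg] mA; set c := E_ratio k.
have mX0 := measurable_setX_A0 k measurableT.
have mX0E : measurable ((setT `*` A0 k) `&` E) by exact: measurableI.
pose s := cadd (fst_restr nu mX0E) (cscale (- c) (fst_restr nu mX0)).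
have sE B : s B = (nu ((B `*` A0 k) `&` E) - c%:E * nu (B `*` A0 k))%E.
  transitivity (nu (fst @^-1` B `&` ((setT `*` A0 k) `&` E)) +
    (- c)%:E * nu (fst @^-1` B `&` (setT `*` A0 k)))%E; first by [].
  rewrite EFinN mulNe; congr (nu _ - _ * nu _)%E;
    by apply/seteqP; split => -[x a] /=; tauto.
have s_inv B : measurable B -> s (iter (2 ^ k) shiftZ @^-1` B) = s B.
  move=> mB; rewrite !sE measure_shift_setX_A0_setI //.
  by rewrite measure_shift_setX_A0.
have s_inv0 B : measurable B -> iter (2 ^ k) shiftZ @^-1` B = B -> s B = 0%E.
  move=> mB /(theta_erg _ mB) [/(theta_eq0 nu_inv k mB) B0|/(theta_eq1 nu_inv k mB) B1].
    rewrite sE B0 mule0 sube0; apply: subset_measure0 B0 => //.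
      by apply: measurableI => //; exact: measurable_setX_A0.
    exact: measurable_setX_A0.
  rewrite sE B1 -E_ratioE (measure_setI_eq _ _ _ _ B1) ?subee ?fin_num_measure //.
  all: try exact: measurable_setX_A0.
  by move=> p [].
have : s A = 0%E := invariant_charge_eq0 (measurable_iter _ measurable_shiftZ)
  (measurable_iter _ measurable_shiftZinv) (iter_can _ shiftZK) (iter_can _ shiftZinvK)
  s_inv s_inv0 mA.
rewrite sE => /eqP; rewrite sube_eq ?add0e => [/eqP//||].
- by rewrite fin_num_measure //; apply: measurableI => //; exact: measurable_setX_A0.
- by rewrite fin_num_adde_defr // fin_numM // fin_num_measure //; exact: measurable_setX_A0.
Qed.

Lemma measure_setX_bitcyl_setIE k r A : theta_ergodic k -> measurable A ->
  nu ((A `*` bitcyl k r) `&` E) = ((E_ratio k)%:E * nu (A `*` bitcyl k r))%E.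
Proof.
move=> erg mA; have [rk|kr] := ltnP r (2 ^ k); last first.
  by rewrite bitcyl_empty // setX0 set0I measure0 mule0.
have mA' := measurable_preimage (measurable_iter (2 ^ k - r) measurable_shiftZinv) mA.
rewrite measure_setX_bitcyl_setI // measure_setX_A0_setIE //.
have := measure_setX_bitcyl_setI nu_inv rk mA measurableT (preimage_setT _).
by rewrite !setIT => ->.
Qed.

Lemma E_ratioS k : theta_ergodic k.+1 -> E_ratio k.+1 = E_ratio k.
Proof.
move=> erg; have x0 := measure_setTX_A0_gt0 nu_inv k.
have mX1 := measurable_setX_A0 k.+1 measurableT.
have mC : measurable (setT `*` bitcyl k.+1 (2 ^ k) : set (IZ * IN)).
  by apply: measurableX => //; exact: measurable_bitcyl.
have splitE : nu ((setT `*` A0 k) `&` E) = (nu ((setT `*` A0 k.+1) `&` E) +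
    nu ((setT `*` bitcyl k.+1 (2 ^ k)) `&` E))%E.
  rewrite setTX_A0S setIUl measureU //; try exact: measurableI.
  by rewrite setIACA setTX_A0S_disjoint set0I.
have split0 : nu (setT `*` A0 k) =
    (nu (setT `*` A0 k.+1) + nu (setT `*` bitcyl k.+1 (2 ^ k)))%E.
  by rewrite setTX_A0S measureU // setTX_A0S_disjoint.
have cx : ((E_ratio k.+1)%:E * nu (setT `*` A0 k))%E =
    ((E_ratio k)%:E * nu (setT `*` A0 k))%E.
  rewrite -E_ratioE splitE measure_setX_A0_setIE // measure_setX_bitcyl_setIE //.
  by rewrite split0 muleDr // ge0_adde_def //= inE measure_ge0.
apply: (mulIf (lt0r_neq0 x0)); apply: EFin_inj.
by rewrite EFinM [in RHS]EFinM fineK // fin_num_measure //; exact: measurable_setX_A0.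
Qed.

Lemma E_ratio_const n : (forall k, (n <= k)%N -> theta_ergodic k) ->
  forall k, (n <= k)%N -> E_ratio k = E_ratio n.
Proof.
move=> erg k /subnKC <-; elim: (k - n)%N => [|m IH]; first by rewrite addn0.
by rewrite addnS E_ratioS ?IH //; apply: erg; rewrite -addnS leq_addr.
Qed.

Lemma measure_invariant_set01 n : (forall k, (n <= k)%N -> theta_ergodic k) ->
  nu E = 0%E \/ nu E = 1%E.
Proof.
move=> erg; have c0 : (0 <= E_ratio n)%R.
  apply: divr_ge0; first exact/fine_ge0/measure_ge0.
  exact/ltW/(measure_setTX_A0_gt0 nu_inv).
have restr_E : forall Y, measurable Y -> mrestr nu mE Y = mscale (NngNum c0) nu Y.
  apply: (@measure_unique _ _ _ _ (fun r => setT `*` bitcyl n r)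
    (bitcyl_rects_generate n) (@setI_closed_bitcyl_rects n)).
  - by move=> r; exists setT, n, r.
  - by apply/seteqP; split => -[x a] // _; exists (bitval n a).
  - move=> _ [A [k [r [mA nk ->]]]].
    by have := measure_setX_bitcyl_setIE r (erg _ nk) mA; rewrite (E_ratio_const erg nk).
  - move=> r; rewrite /mrestr ltey_eq fin_num_measure //.
    exact: measurableX measurableT (measurable_bitcyl n r).
have := restr_E E mE; rewrite /mrestr /mscale /= setIid.
have := restr_E setT measurableT; rewrite /mrestr /mscale /= setTI probability_setT mule1.
move=> ->.
rewrite -EFinM => e; have cc := EFin_inj e.
have /eqP : E_ratio n * (1 - E_ratio n) = 0 by rewrite mulrBr mulr1 -cc subrr.
by rewrite mulf_eq0 subr_eq0 => /orP[/eqP ->|/eqP <-]; [left|right].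
Qed.

End ergodic_of_theta.

Theorem lemma3 (R : realType) (nu : probability (IZ * IN)%type R) :
  in_M nu ->
  [<-> ergodic_for nu SxO;
       forall k : nat, ergodic_for (theta nu k) (iter (2 ^ k) shiftZ);
       exists n : nat, forall k : nat, (n <= k)%N ->
         ergodic_for (theta nu k) (iter (2 ^ k) shiftZ)].
Proof.
move=> nu_inv; tfae.
- by move=> erg k; exact: ergodic_theta.
- by move=> erg; exists 0%N => k _; exact: erg.
- move=> [n erg]; split => // E mE E_inv.
  by have [] := measure_invariant_set01 nu_inv mE E_inv erg; [left|right].
Qed.
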